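(* For any rooted tree $t=B_+(t_1\cdots t_n)$ and any integer $s\ge0$, $$C_s(t)=\sum_{j=0}^{s}\ \sum_{\substack{r_1+\cdots+r_n=s-j\\ r_1,\ldots,r_n\ge0}}\mathrm{qsh}\big(|t_1|-r_1,\ldots,|t_n|-r_n;\,j\big)\,C_{r_1}(t_1)\cdots C_{r_n}(t_n),$$ where terms with some $r_i\ge|t_i|$ vanish since then $C_{r_i}(t_i)=0$. In particular $C_0(t)=\frac{|t|!}{t!}$, and for the generalized corolla $\mathcal C_{k_1,\ldots,k_n}=B_+(E_{k_1}\cdots E_{k_n})$ one has $C_s(\mathcal C_{k_1,\ldots,k_n})=\mathrm{qsh}(k_1,\ldots,k_n;s)$.
   Context: Let $k$ be a field of characteristic $0$. Rooted trees are finite, non-planar; $|t|$ is the number of vertices of $t$; $B_+(t_1\cdots t_n)$ joins the roots of $t_1,\dots,t_n$ to a new root. The tree factorial: $\bullet!=1$ for the one-vertex tree, $B_+(t_1\cdots t_n)!=|B_+(t_1\cdots t_n)|\prod_jt_j!$. $E_j$ denotes the ladder with $j$ vertices (a chain rooted at an end). $\mathcal H_{CK}$ is the free commutative algebra on nonempty rooted trees; $\mathcal A=k[x]$ carries the quasi-shuffle product $\diamond$ determined by $\mathbf 1\diamond u=u\diamond\mathbf 1=u$ and $x^k\diamond x^l=(x^{k-1}\diamond x^l)x+(x^k\diamond x^{l-1})x+(x^{k-1}\diamond x^{l-1})x$ ($k,l\ge1$). $\Lambda:\mathcal H_{CK}\to\mathcal A$ is the unique unital algebra morphism with $\Lambda(B_+(t_1\cdots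 t_n))=(\Lambda(t_1)\diamond\cdots\diamond\Lambda(t_n))x$. For a nonempty tree $t$, $C_s(t)$ denotes the coefficient of $x^{|t|-s}$ in $\Lambda(t)$ (zero if $|t|-s\le0$ or $s<0$). For nonnegative integers $k_1,\ldots,k_n$ with $K=k_1+\cdots+k_n$ and $r\ge0$, $\mathrm{qsh}(k_1,\ldots,k_n;r)$ is the number of surjective maps $\pi:\{1,\ldots,K\}\to\{1,\ldots,K-r\}$ that are strictly increasing on each block $\{k_1+\cdots+k_j+1,\ldots,k_1+\cdots+k_{j+1}\}$, $j=0,\ldots,n-1$ (equivalently, the coefficient of $x^{K-r}$ in $x^{k_1}\diamond\cdots\diamond x^{k_n}$). *)

From HB Require Import structures.
From mathcomp Require Import all_boot all_order all_algebra.
Set Implicit Arguments. Unset Strict Implicit. Unset Printing Implicit Defensive.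
Import GRing.Theory.
Local Open Scope ring_scope.

(* Rooted trees: a tree is B_+ of a (finite) list of subtrees.  Trees are
   non-planar in the paper; all notions below are invariant under reordering
   of children, so the planar representation is harmless. *)
Inductive tree : Type := Node of seq tree.

Fixpoint tr_size (t : tree) : nat :=
  let: Node ts := t in (sumn (map tr_size ts)).+1.

Fixpoint tfact (t : tree) : nat :=
  let: Node ts := t in (sumn (map tr_size ts)).+1 * foldr muln 1%N (map tfact ts).

(* ladder E_k with k vertices (k >= 1); ladder 0 is junk = ladder 1 *)
Definition ladder (k : nat) : tree := iter k.-1 (fun t => Node [:: t]) (Node [::]).

Section QSh.
Variable F : fieldType.

Fixpoint qsh_mon (k l : nat) {struct k} : {poly F} :=
  match k with
  | 0 => 'X^l
  | k'.+1 =>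
      let fix qm' (l : nat) : {poly F} :=
        match l with
        | 0 => 'X^(k'.+1)
        | l'.+1 => (qsh_mon k' l + qm' l' + qsh_mon k' l') * 'X
        end in qm' l
  end.

Definition diamond (p q : {poly F}) : {poly F} :=
  \sum_(i < size p) \sum_(j < size q) (p`_i * q`_j) *: qsh_mon i j.

Fixpoint Lambda (t : tree) : {poly F} :=
  let: Node ts := t in (foldr diamond 1 (map Lambda ts)) * 'X.

Definition Ccoef (s : nat) (t : tree) : F :=
  if (s < tr_size t)%N then (Lambda t)`_(tr_size t - s) else 0.
End QSh.

(* qsh(k_1,...,k_n; r): number of surjections {1..K} -> {1..K-r} strictly
   increasing on each block; 0 when r > K (no such codomain). *)
Definition same_block (ks : seq nat) (p q : nat) : bool :=
  [exists j : 'I_(size ks),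
     [&& (sumn (take j ks) <= p)%N, (p < sumn (take j.+1 ks))%N,
         (sumn (take j ks) <= q)%N & (q < sumn (take j.+1 ks))%N]].

Definition qsh (ks : seq nat) (r : nat) : nat :=
  let K := sumn ks in
  if (r <= K)%N then
    #|[set f : {ffun 'I_K -> 'I_(K - r)} |
        [forall y, y \in codom f] &&
        [forall p : 'I_K, forall q : 'I_K,
           ((p < q)%N && same_block ks p q) ==> (f p < f q)%N]]|
  else 0%N.

From mathcomp Require Import all_boot all_order all_algebra zify.
Import GRing.Theory.
Set Implicit Arguments. Unset Strict Implicit. Unset Printing Implicit Defensive.

(* For y in nat, the binomial evaluation p |-> sum_i p_i 'C(y, i)
   is linear, turns the quasi-shuffle product <> into the ordinary product
   ('C(y, i) 'C(y, j) obeys the same recursion in (i, j, y) as x^i <> x^j, by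
   Pascal's rule), and these forms jointly separate polynomials.  Hence:
   - x^k1 <> ... <> x^kn evaluates to prod_i 'C(y, k_i), the number of maps
     [0, K) -> [0, y) increasing on the blocks of (k1, ..., kn); sorting these
     maps by their image gives sum_N 'C(y, N) * #(block-increasing surjections
     onto [0, N)), so the coefficient of x^N counts such surjections, i.e. it
     is qsh(k1, ..., kn; K - N);
   - writing Lambda(t_i) = sum_r C_r(t_i) x^(|t_i| - r) and expanding the
     quasi-shuffle multilinearly writes Lambda(B_+(t_1 ... t_n)) / x as a
     combination of the x^(|t_1| - r_1) <> ... <> x^(|t_n| - r_n); the
     coefficient of x^(|t| - s), regrouped by j = s - (r_1 + ... + r_n), is the
     recursion (first assertion);
   - the leading coefficient of p <> q is p_a q_b 'C(a + b, a), which gives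
     C_0(t) t! = |t|! by induction (second assertion); Lambda(E_k) = x^k, so
     the corolla case is the monomial case (third assertion).
   The file follows this order: block-increasing maps and their counting,
   binomial evaluation, quasi-shuffles of monomials, sums over compositions,
   and finally trees. *)

Lemma big_ord_widen_neutral (R : Type) (idx : R) (op : Monoid.law idx)
    (a b : nat) (G : nat -> R) :
  a <= b -> (forall i, a <= i -> i < b -> G i = idx) ->
  \big[op/idx]_(i < a) G i = \big[op/idx]_(i < b) G i.
Proof.
move=> le_ab G_idx; rewrite (big_ord_widen b G le_ab) big_mkcond.
by apply: eq_bigr => i _; case: ltnP => // le_ai; rewrite G_idx.
Qed.

Lemma same_block_head k ks p q : p < k -> q < k -> same_block (k :: ks) p q.
Proof.
by move=> lt_pk lt_qk; apply/existsP; exists ord0; rewrite /= take0 addn0 lt_pk lt_qk.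
Qed.

Lemma same_block_split k ks p q : p < k -> k <= q -> same_block (k :: ks) p q = false.
Proof.
move=> lt_pk le_kq; apply/negbTE/existsP => -[[[|j] lt_j]] /=.
  by rewrite take0 addn0 => /andP[_]; rewrite ltnNge le_kq.
by rewrite leqNgt (leq_trans lt_pk (leq_addr _ _)).
Qed.

Lemma same_block_shift k ks a b :
  same_block (k :: ks) (k + a) (k + b) = same_block ks a b.
Proof.
apply/existsP/existsP => -[[j lt_j]] /=.
  case: j lt_j => [|j] lt_j /=; first by rewrite take0 addn0 ltnNge leq_addr.
  by rewrite !leq_add2l !ltn_add2l => blk; exists (Ordinal (lt_j : j < size ks)).
by move=> blk; exists (Ordinal (lt_j : j.+1 < (size ks).+1)); rewrite /= !leq_add2l !ltn_add2l.
Qed.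

Definition increasing k N (g : {ffun 'I_k -> 'I_N}) : bool :=
  [forall p : 'I_k, forall q : 'I_k, (p < q) ==> (g p < g q)].

Lemma sorted_tupleP k N (t : k.-tuple 'I_N) :
  sorted ltn (map val t) =
  [forall p : 'I_k, forall q : 'I_k, (p < q) ==> (tnth t p < tnth t q)].
Proof.
have nthE (i : 'I_k) : nth 0 (map val t) i = tnth t i.
  by rewrite (nth_map (tnth t i)) ?size_tuple // -tnth_nth.
apply/idP/forallP => [srt p | incr].
  apply/forallP => q; apply/implyP => lt_pq; rewrite -!nthE.
  by apply: (sorted_ltn_nth ltn_trans) => //; rewrite inE size_map size_tuple.
apply/(sortedP 0) => i; rewrite size_map size_tuple => lt_i.
move/forallP: (incr (Ordinal (ltnW lt_i))) => /(_ (Ordinal lt_i)) /implyP.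
by rewrite -!nthE; apply.
Qed.

Lemma card_increasing k N : #|[set g : {ffun 'I_k -> 'I_N} | increasing g]| = 'C(N, k).
Proof.
rewrite -card_ltn_sorted_tuples.
pose tup (g : {ffun 'I_k -> 'I_N}) := [tuple g i | i < k].
have tup_inj : injective tup.
  move=> g1 g2 eq_g; apply/ffunP => i.
  by rewrite -(tnth_mktuple g1) -(tnth_mktuple g2) -/(tup _) eq_g.
rewrite -(card_imset _ tup_inj); apply: eq_card => t; rewrite inE sorted_tupleP.
apply/imsetP/idP => [[g] | incr].
  rewrite inE => /forallP incr ->; apply/forallP => p; apply/forallP => q.
  by rewrite !tnth_mktuple; move/forallP: (incr p) => /(_ q).
exists [ffun i => tnth t i]; last by apply: eq_from_tnth => i; rewrite tnth_mktuple ffunE.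
rewrite inE; apply/forallP => p; apply/forallP => q; rewrite !ffunE.
by move/forallP: incr => /(_ p) /forallP /(_ q).
Qed.

Definition block_increasing ks N (f : {ffun 'I_(sumn ks) -> 'I_N}) : bool :=
  [forall p : 'I_(sumn ks), forall q : 'I_(sumn ks),
     ((p < q) && same_block ks p q) ==> (f p < f q)].

Definition block_inc ks N := [set f : {ffun 'I_(sumn ks) -> 'I_N} | block_increasing f].

Definition block_surj ks N :=
  [set f : {ffun 'I_(sumn ks) -> 'I_N} | [forall z, z \in codom f] && block_increasing f].

Lemma qshE ks r : qsh ks r = if r <= sumn ks then #|block_surj ks (sumn ks - r)| else 0.
Proof. by []. Qed.

Lemma block_increasing_cons k ks N (f : {ffun 'I_(k + sumn ks) -> 'I_N}) :
  @block_increasing (k :: ks) N f =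
  increasing [ffun i => f (lshift (sumn ks) i)]
  && @block_increasing ks N [ffun j => f (rshift k j)].
Proof.
apply/forallP/andP => [inc_f | [/forallP inc_l /forallP inc_r] p]; first split.
- apply/forallP => p; apply/forallP => q; apply/implyP => lt_pq; rewrite !ffunE.
  move/forallP: (inc_f (lshift _ p)) => /(_ (lshift _ q)) /implyP; apply.
  by rewrite /= lt_pq same_block_head.
- apply/forallP => p; apply/forallP => q; apply/implyP => /andP[lt_pq blk]; rewrite !ffunE.
  move/forallP: (inc_f (rshift k p)) => /(_ (rshift k q)) /implyP; apply.
  by rewrite /= ltn_add2l lt_pq same_block_shift.
apply/forallP => q; apply/implyP => /andP[lt_pq blk].
case: (split_ordP p) blk lt_pq => i ->; case: (split_ordP q) => j -> /=.
- by move=> _ lt_ij; move/forallP: (inc_l i) => /(_ j) /implyP; rewrite !ffunE; apply.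
- by rewrite /= same_block_split ?leq_addr.
- by rewrite ltnNge (leq_trans (ltnW (ltn_ord j)) (leq_addr _ _)).
rewrite ltn_add2l same_block_shift => blk lt_ij.
by move/forallP: (inc_r i) => /(_ j) /implyP; rewrite !ffunE; apply; rewrite lt_ij.
Qed.

(* Block-increasing maps are independent choices of an increasing map on
   each block, by block_increasing_cons. *)
Lemma card_block_inc ks N : #|block_inc ks N| = \prod_(k <- ks) 'C(N, k).
Proof.
elim: ks => [|k ks IH].
  have -> : \prod_(k <- [::]) 'C(N, k) = #|{ffun 'I_0 -> 'I_N}|.
    by rewrite big_nil card_ffun !card_ord.
  by apply: eq_card => f; rewrite inE; apply/forallP => -[].
pose L := sumn ks.
pose restr (f : {ffun 'I_(k + L) -> 'I_N}) :=
  ([ffun i => f (lshift L i)], [ffun j => f (rshift k j)]).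
pose glue (gh : {ffun 'I_k -> 'I_N} * {ffun 'I_L -> 'I_N}) : {ffun 'I_(k + L) -> 'I_N} :=
  [ffun p => match split p with inl i => gh.1 i | inr j => gh.2 j end].
have restrK : cancel restr glue.
  by move=> f; apply/ffunP => p; rewrite ffunE; case: (split_ordP p) => i ->; rewrite ffunE.
have glueK : cancel glue restr.
  move=> [g h]; congr pair; apply/ffunP => i; rewrite !ffunE.
    by rewrite (unsplitK (inl i) : split (lshift L i) = inl i).
  by rewrite (unsplitK (inr i) : split (rshift k i) = inr i).
rewrite big_cons -IH -card_increasing -cardsX -(card_imset _ (can_inj restrK)).
apply: eq_card => gh; rewrite -[gh]glueK (mem_imset _ _ (can_inj restrK)).
by rewrite !inE block_increasing_cons.
Qed.

Lemma enum_val_ltnE y (U : {set 'I_y}) (i j : 'I_#|U|) :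
  (enum_val i < enum_val j) = (i < j).
Proof.
have srt : sorted ltn (map val (enum U)).
  rewrite -[enum _](eq_filter (mem_enum _)) -(eq_filter (mem_map val_inj _)) -filter_map.
  by rewrite (sorted_filter ltn_trans) // unlock val_ord_enum iota_ltn_sorted.
have mono (a b : 'I_#|U|) : a < b -> enum_val a < enum_val b.
  move=> lt_ab; rewrite (enum_val_nth (enum_val a) a) (enum_val_nth (enum_val a) b).
  rewrite -!(nth_map (enum_val a) 0) -?cardE //.
  by apply: (sorted_ltn_nth ltn_trans) => //; rewrite inE size_map -cardE.
apply/idP/idP => [|/mono //]; case: (ltngtP i j) => // [lt_ji | /val_inj ->]; last by rewrite ltnn.
by move/(ltn_trans (mono _ _ lt_ji)); rewrite ltnn.
Qed.

(* Block-increasing maps with image U are block-increasing surjections onto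
   [0, #|U|), composed with the increasing enumeration of U. *)
Lemma card_block_inc_image ks y (U : {set 'I_y}) :
  #|[set f in block_inc ks y | f @: [set: 'I_(sumn ks)] == U]| = #|block_surj ks #|U| |.
Proof.
pose emb (g : {ffun 'I_(sumn ks) -> 'I_#|U|}) : {ffun 'I_(sumn ks) -> 'I_y} :=
  [ffun p => enum_val (g p)].
have emb_inj : injective emb.
  move=> g1 g2 /ffunP eq_g; apply/ffunP => p; apply: enum_val_inj.
  by have := eq_g p; rewrite !ffunE.
have inc_emb g : block_increasing (emb g) = block_increasing g.
  by apply: eq_forallb => p; apply: eq_forallb => q; rewrite !ffunE enum_val_ltnE.
rewrite -(card_imset _ emb_inj); apply: eq_card => f; rewrite !inE.
apply/andP/imsetP => [[inc_f /eqP im_f] | [g]].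
  have f_U p : f p \in U by rewrite -im_f imset_f.
  pose g := [ffun p => enum_rank_in (f_U p) (f p)].
  have embK : emb g = f by apply/ffunP => p; rewrite !ffunE enum_rankK_in.
  exists g => //; rewrite inE -inc_emb embK inc_f andbT; apply/forallP => z.
  have : enum_val z \in f @: [set: _] by rewrite im_f enum_valP.
  case/imsetP => p _ ez; have -> : z = g p by apply: enum_val_inj; rewrite ez ffunE enum_rankK_in.
  exact: codom_f.
rewrite inE => /andP[/forallP onto inc_g] ->; split; first by rewrite inc_emb.
apply/eqP/setP => x; apply/imsetP/idP => [[p _ ->] | x_U]; first by rewrite ffunE enum_valP.
by have /codomP [p ep] := onto (enum_rank_in x_U x); exists p; rewrite // ffunE -ep enum_rankK_in.
Qed.

(* Sorting block-increasing maps by the size of their image. *)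
Lemma card_block_inc_by_image ks y :
  #|block_inc ks y| = \sum_(N < y.+1) 'C(y, N) * #|block_surj ks N|.
Proof.
have card_lt (U : {set 'I_y}) : #|U| < y.+1 by rewrite ltnS -[y in _ <= y]card_ord max_card.
rewrite -sum1_card.
rewrite (partition_big (fun f : {ffun 'I_(sumn ks) -> 'I_y} => f @: [set: 'I_(sumn ks)]) predT) //=.
rewrite (partition_big (fun U : {set 'I_y} => inord #|U| : 'I_y.+1) predT) //=.
apply: eq_bigr => N _; rewrite (eq_bigr (fun _ => #|block_surj ks N|)); last first.
  move=> U /eqP <-; rewrite inordK // -card_block_inc_image sum1_card.
  by apply: eq_card => f; rewrite [RHS]inE.
rewrite sum_nat_const -[y in 'C(y, _)](card_ord y) -card_draws; congr (_ * _).
by apply: eq_card => U; rewrite !inE unfold_in /= inordK.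
Qed.

Lemma block_surj_large ks N : sumn ks < N -> #|block_surj ks N| = 0.
Proof.
move=> lt_N; apply: eq_card0 => f; rewrite inE; apply/negbTE/negP => /andP[/forallP onto _].
have : #|'I_N| <= size (codom f).
  by apply: leq_trans (card_size _); apply/subset_leq_card/subsetP => z _; apply: onto.
by rewrite card_ord size_codom card_ord leqNgt lt_N.
Qed.

Lemma prod_binomial_surj ks y :
  \sum_(N < (sumn ks).+1) 'C(y, N) * #|block_surj ks N| = \prod_(k <- ks) 'C(y, k).
Proof.
rewrite -card_block_inc card_block_inc_by_image.
pose G N := 'C(y, N) * #|block_surj ks N|.
transitivity (\sum_(N < sumn ks + y.+1) G N).
  apply: big_ord_widen_neutral; first by rewrite addnS ltnS leq_addr.
  by move=> i lt_i _; rewrite /G block_surj_large ?muln0.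
symmetry; apply: big_ord_widen_neutral; first exact: leq_addl.
by move=> i lt_i _; rewrite /G bin_small.
Qed.

Local Open Scope ring_scope.

Lemma size_mulX_leq (R : nzRingType) (p : {poly R}) : (size (p * 'X)%R <= (size p).+1)%N.
Proof. by have [-> | nz_p] := eqVneq p 0; rewrite ?mul0r ?size_poly0 // size_mulX. Qed.

Section BinomialEvaluation.
Variable F : fieldType.
Implicit Types p q : {poly F}.

(* The binomial evaluation of p at y is sum_i p_i 'C(y, i), i.e. the value at
   y of p written in the binomial basis.  These linear forms turn the
   quasi-shuffle product into the pointwise product (bineval_diamond) and
   together they separate polynomials (bineval_inj). *)
Definition bineval (y : nat) p : F := \sum_(i < size p) p`_i * 'C(y, i)%:R.

Lemma binevalE y p M : (size p <= M)%N -> bineval y p = \sum_(i < M) p`_i * 'C(y, i)%:R.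
Proof.
move=> le_pM; rewrite /bineval.
apply: (@big_ord_widen_neutral _ _ _ _ _ (fun i => p`_i * 'C(y, i)%:R)) => // i le_pi _.
by rewrite nth_default // mul0r.
Qed.

Lemma binevalD y p q : bineval y (p + q) = bineval y p + bineval y q.
Proof.
pose M := maxn (size p) (size q).
rewrite (@binevalE y (p + q) M) ?size_polyD // (@binevalE y p M) ?leq_maxl //.
rewrite (@binevalE y q M) ?leq_maxr // -big_split.
by apply: eq_bigr => i _; rewrite coefD mulrDl.
Qed.

Lemma binevalZ y c p : bineval y (c *: p) = c * bineval y p.
Proof.
rewrite (binevalE y (size_scale_leq c p)) mulr_sumr.
by apply: eq_bigr => i _; rewrite coefZ mulrA.
Qed.

Lemma bineval_sum y (I : Type) (r : seq I) (P : pred I) (G : I -> {poly F}) :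
  bineval y (\sum_(i <- r | P i) G i) = \sum_(i <- r | P i) bineval y (G i).
Proof.
apply: (big_morph (bineval y) (binevalD y)).
by rewrite /bineval size_poly0 big_ord0.
Qed.

Lemma bineval_Xn y l : bineval y 'X^l = 'C(y, l)%:R.
Proof.
rewrite /bineval size_polyXn big_ord_recr /= coefXn eqxx mul1r big1 ?add0r // => i _.
by rewrite coefXn eq_sym gtn_eqF // mul0r.
Qed.

Lemma bineval1 y : bineval y 1 = 1.
Proof. by rewrite -(expr0 'X) bineval_Xn bin0. Qed.

Lemma bineval_at0 p : bineval 0 p = p`_0.
Proof.
rewrite (binevalE 0 (leqnSn (size p))) big_ord_recl bin0 mulr1 big1 ?addr0 //.
by move=> i _; rewrite bin0n mulr0.
Qed.

Lemma bineval_mulX_shift y p : bineval y (p * 'X) = \sum_(i < size p) p`_i * 'C(y, i.+1)%:R.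
Proof.
rewrite (binevalE y (size_mulX_leq p)) big_ord_recl coefMX /= mul0r add0r.
by apply: eq_bigr => i _; rewrite coefMX.
Qed.

(* Pascal's rule in the evaluation point, for multiples of x. *)
Lemma bineval_mulX y p : bineval y.+1 (p * 'X) = bineval y p + bineval y (p * 'X).
Proof.
rewrite !bineval_mulX_shift /bineval -big_split; apply: eq_bigr => i _.
by rewrite binS natrD mulrDr addrC.
Qed.

Lemma qsh_monSS i j :
  qsh_mon F i.+1 j.+1 = (qsh_mon F i j.+1 + qsh_mon F i.+1 j + qsh_mon F i j) * 'X.
Proof. by []. Qed.

Lemma bineval_qsh_mon y i j : bineval y (qsh_mon F i j) = 'C(y, i)%:R * 'C(y, j)%:R.
Proof.
elim: i j y => [|i IHi] j y; first by rewrite bineval_Xn bin0 mul1r.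
elim: j y => [|j IHj] y; first by rewrite bineval_Xn bin0 mulr1.
rewrite qsh_monSS; elim: y => [|y IHy]; first by rewrite bineval_at0 coefMX /= !bin0n mul0r.
rewrite bineval_mulX IHy !binevalD IHi IHj IHi !binS !natrD.
by rewrite mulrDl !mulrDr [LHS]addrC !addrA (addrAC (_ * 'C(y, j.+1)%:R)).
Qed.

Lemma bineval_diamond y p q : bineval y (diamond p q) = bineval y p * bineval y q.
Proof.
rewrite /diamond bineval_sum big_distrl /=; apply: eq_bigr => i _.
rewrite bineval_sum big_distrr /=; apply: eq_bigr => j _.
by rewrite binevalZ bineval_qsh_mon mulrACA.
Qed.

Lemma bineval_foldr_diamond y (ps : seq {poly F}) :
  bineval y (foldr (@diamond F) 1 ps) = \prod_(p <- ps) bineval y p.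
Proof.
elim: ps => [|p ps IH]; first by rewrite big_nil bineval1.
by rewrite big_cons /= bineval_diamond IH.
Qed.

(* Evaluating at y = n isolates p_n modulo lower coefficients: the
   binomial evaluations determine a polynomial. *)
Lemma bineval_inj p q : (forall y, bineval y p = bineval y q) -> p = q.
Proof.
move=> eq_pq; apply/eqP; rewrite -subr_eq0; apply/eqP/polyP => n; rewrite coef0.
have vanish y : bineval y (p - q) = 0.
  by rewrite binevalD -scaleN1r binevalZ eq_pq mulN1r subrr.
elim/ltn_ind: n => n IH; have := vanish n.
rewrite (@binevalE n _ (size (p - q) + n.+1)) ?leq_addr //.
rewrite -(subnKC (leq_addl (size (p - q)) n.+1)) big_split_ord /=.
rewrite [X in _ + X]big1 ?addr0 => [|i _]; last by rewrite bin_small ?mulr0 // leq_addr.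
by rewrite big_ord_recr /= big1 ?add0r ?binn ?mulr1 // => i _; rewrite IH ?mul0r.
Qed.

End BinomialEvaluation.

Section MonomialQuasiShuffle.
Variable F : fieldType.

Definition qsh_poly (ks : seq nat) : {poly F} := foldr (@diamond F) 1 (map (fun k => 'X^k) ks).

Lemma bineval_qsh_poly y ks : bineval y (qsh_poly ks) = \prod_(k <- ks) 'C(y, k)%:R.
Proof. by rewrite bineval_foldr_diamond big_map; apply: eq_bigr => k _; rewrite bineval_Xn. Qed.

(* Its coefficients count block-increasing surjections: both sides have the
   same binomial evaluations by prod_binomial_surj. *)
Lemma coef_qsh_poly ks N : (qsh_poly ks)`_N = #|block_surj ks N|%:R.
Proof.
have -> : qsh_poly ks = \poly_(N < (sumn ks).+1) #|block_surj ks N|%:R.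
  apply: bineval_inj => y; rewrite bineval_qsh_poly -natr_prod -prod_binomial_surj natr_sum.
  rewrite (binevalE y (size_poly _ _)); apply: eq_bigr => i _.
  by rewrite coef_poly ltn_ord natrM mulrC.
by rewrite coef_poly; case: ltnP => // le_N; rewrite block_surj_large.
Qed.

(* The coefficient of x^(sumn ks + a - s), read off as a value of qsh; this is
   the form in which these coefficients enter the recursion for C_s. *)
Lemma coef_qsh_poly_shift ks a s :
  (if (s <= sumn ks + a)%N then (qsh_poly ks)`_(sumn ks + a - s) else 0)
  = if (a <= s)%N then (qsh ks (s - a))%:R else 0.
Proof.
rewrite qshE coef_qsh_poly.
case: (leqP s (sumn ks + a)) => le_s; case: (leqP a s) => le_a //.
- have -> : (s - a <= sumn ks)%N = true by lia.
  by have -> : (sumn ks - (s - a) = sumn ks + a - s)%N by lia.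
- by rewrite block_surj_large //; lia.
by have -> : (s - a <= sumn ks)%N = false by lia.
Qed.

Lemma foldr_diamond_expansion n B (c : 'I_n -> nat -> F) (d : 'I_n -> nat) :
  foldr (@diamond F) 1 [seq \sum_(r < B) c i r *: 'X^(d i - r) | i <- enum 'I_n] =
  \sum_(r : {ffun 'I_n -> 'I_B})
     (\prod_(i < n) c i (r i)) *: qsh_poly [seq (d i - r i)%N | i <- enum 'I_n].
Proof.
apply: bineval_inj => y; rewrite bineval_foldr_diamond big_map big_enum /= bineval_sum.
under eq_bigr => i _ do rewrite bineval_sum; under eq_bigr => i _ do
  under eq_bigr => r _ do rewrite binevalZ bineval_Xn.
rewrite bigA_distr_bigA; apply: eq_bigr => r _.
by rewrite binevalZ bineval_qsh_poly big_map big_enum -big_split.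
Qed.

End MonomialQuasiShuffle.

Definition ffun_val n m (r : {ffun 'I_n -> 'I_m}) : {ffun 'I_n -> nat} := [ffun i => val (r i)].

Lemma ffun_valE n m (r : {ffun 'I_n -> 'I_m}) i : ffun_val r i = r i.
Proof. by rewrite ffunE. Qed.

Lemma sum_compositions_widen (R : nmodType) n m B (G : {ffun 'I_n -> nat} -> R) :
  (m < B)%N ->
  \sum_(r : {ffun 'I_n -> 'I_m.+1} | (\sum_i ffun_val r i == m)%N) G (ffun_val r) =
  \sum_(r : {ffun 'I_n -> 'I_B} | (\sum_i ffun_val r i == m)%N) G (ffun_val r).
Proof.
move=> lt_mB.
pose wid (r : {ffun 'I_n -> 'I_m.+1}) : {ffun 'I_n -> 'I_B} := [ffun i => widen_ord lt_mB (r i)].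
pose cut (r : {ffun 'I_n -> 'I_B}) : {ffun 'I_n -> 'I_m.+1} := [ffun i => inord (r i)].
have val_wid r : ffun_val (wid r) = ffun_val r by apply/ffunP => i; rewrite !ffun_valE ffunE.
have part_le (r : {ffun 'I_n -> 'I_B}) i : (ffun_val r i <= \sum_j ffun_val r j)%N.
  by rewrite (bigD1 i) //= leq_addr.
symmetry; rewrite (reindex_onto wid cut) /= => [|r /eqP sum_r]; last first.
  apply/ffunP => i; apply: val_inj; rewrite /wid /cut !ffunE /= inordK //.
  by rewrite ltnS -sum_r -ffun_valE part_le.
apply: eq_big => r; rewrite val_wid // andb_idr // => _.
by apply/eqP/ffunP => i; apply: val_inj; rewrite /wid /cut !ffunE /= inordK.
Qed.

Lemma sum_compositions (R : nmodType) n s B (g : nat -> {ffun 'I_n -> nat} -> R) :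
  (s < B)%N ->
  \sum_(j < s.+1) \sum_(r : {ffun 'I_n -> 'I_(s - j).+1} | (\sum_i ffun_val r i == s - j)%N)
     g j (ffun_val r) =
  \sum_(r : {ffun 'I_n -> 'I_B})
     if (\sum_i ffun_val r i <= s)%N then g (s - \sum_i ffun_val r i)%N (ffun_val r) else 0.
Proof.
move=> lt_sB; rewrite (eq_bigr (fun j : 'I_s.+1 =>
  \sum_(r : {ffun 'I_n -> 'I_B} | (\sum_i ffun_val r i == s - j)%N) g j (ffun_val r))); last first.
  by move=> j _; apply: sum_compositions_widen; apply: leq_ltn_trans (leq_subr _ _) lt_sB.
rewrite (exchange_big_dep xpredT) //=; apply: eq_bigr => r _.
case: leqP => [le_ws | lt_sw]; last by rewrite big_pred0 // => j; apply/eqP; lia.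
rewrite (big_pred1 (inord (s - \sum_i ffun_val r i))) /= ?inordK ?ltnS ?leq_subr //.
move=> j; rewrite /pred1 /= -val_eqE /= inordK ?ltnS ?leq_subr //.
by have lt_j := ltn_ord j; apply/eqP/eqP; lia.
Qed.

Section Trees.
Variable F : fieldType.
Implicit Types (t : tree) (ts : seq tree) (p q : {poly F}).
Local Notation child ts i := (nth (Node [::]) ts i).

Lemma tr_size_In t ts : List.In t ts -> (tr_size t <= sumn (map tr_size ts))%N.
Proof.
elim: ts => [|u ts IH] //= [<- | /IH]; first exact: leq_addr.
by move/leq_trans; apply; apply: leq_addl.
Qed.

Lemma tree_ind_In (P : tree -> Prop) :
  (forall ts, (forall t, List.In t ts -> P t) -> P (Node ts)) -> forall t, P t.
Proof.
move=> step t; move: {2}(tr_size t) (leqnn (tr_size t)) => n.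
elim: n t => [|n IH] [ts] //= le_n; apply: step => t in_t; apply: IH.
by apply: leq_trans (tr_size_In in_t) _; rewrite -ltnS.
Qed.

Lemma size_qsh_mon i j : (size (qsh_mon F i j) <= (i + j).+1)%N.
Proof.
elim: i j => [|i IHi] j; first by rewrite size_polyXn.
elim: j => [|j IHj]; first by rewrite size_polyXn addn0.
rewrite qsh_monSS; apply: leq_trans (size_mulX_leq _) _; rewrite ltnS.
apply: leq_trans (size_polyD _ _) _; rewrite geq_max; apply/andP; split.
  apply: leq_trans (size_polyD _ _) _; rewrite geq_max; apply/andP; split.
    by rewrite addSn IHi.
  by rewrite addnS IHj.
by apply: leq_trans (IHi j) _; rewrite addSn addnS ltnS leqW.
Qed.

Lemma size_diamond p q a b : (size p <= a.+1)%N -> (size q <= b.+1)%N ->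
  (size (diamond p q) <= (a + b).+1)%N.
Proof.
move=> le_pa le_qb; pose P (u : {poly F}) := (size u <= (a + b).+1)%N.
have P0 : P 0 by rewrite /P size_poly0.
have PD u v : P u -> P v -> P (u + v).
  by rewrite /P => le_u le_v; apply: leq_trans (size_polyD _ _) _; rewrite geq_max le_u.
apply: (big_ind P) => // i _; apply: (big_ind P) => // j _.
apply: leq_trans (size_scale_leq _ _) _; apply: leq_trans (size_qsh_mon _ _) _.
by rewrite ltnS leq_add // -ltnS; apply: leq_trans (ltn_ord _) _.
Qed.

Lemma size_forest ts :
  (forall t, List.In t ts -> (size (Lambda F t) <= (tr_size t).+1)%N) ->
  (size (foldr (@diamond F) 1%R (map (Lambda F) ts)) <= (sumn (map tr_size ts)).+1)%N.
Proof.
elim: ts => [|t ts IH] size_ts /=; first by rewrite size_poly1.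
by apply: size_diamond; [apply: size_ts; left | apply: IH => u in_u; apply: size_ts; right].
Qed.

Lemma size_Lambda t : (size (Lambda F t) <= (tr_size t).+1)%N.
Proof.
elim/tree_ind_In: t => ts IH; apply: leq_trans (size_mulX_leq _) _.
by rewrite /= ltnS size_forest.
Qed.

Lemma Lambda_coef0 t : (Lambda F t)`_0 = 0.
Proof. by case: t => ts; rewrite /= coefMX. Qed.

Lemma Lambda_expansion t B : (tr_size t <= B)%N ->
  Lambda F t = \sum_(r < B) Ccoef F r t *: 'X^(tr_size t - r).
Proof.
move=> le_tB; set T := tr_size t.
have -> : Lambda F t = \sum_(i < T.+1) (Lambda F t)`_i *: 'X^i.
  rewrite -[LHS]coefK poly_def.
  apply: (@big_ord_widen_neutral _ _ _ _ _ (fun i => (Lambda F t)`_i *: 'X^i)) => [|i le_i _].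
    exact: size_Lambda.
  by rewrite nth_default ?scale0r.
rewrite -(big_mkord xpredT (fun i => (Lambda F t)`_i *: 'X^i)) big_rev_mkord subn0.
rewrite big_ord_recr /= subnn Lambda_coef0 scale0r addr0.
transitivity (\sum_(r < T) Ccoef F r t *: 'X^(T - r)).
  by apply: eq_bigr => r _; rewrite /Ccoef ltn_ord !subSS.
apply: (@big_ord_widen_neutral _ _ _ _ _ (fun r => Ccoef F r t *: 'X^(T - r))) => // r le_r _.
by rewrite /Ccoef ltnNge le_r scale0r.
Qed.

Lemma tr_size_child ts i : (i < size ts)%N -> (tr_size (child ts i) <= sumn (map tr_size ts))%N.
Proof.
elim: ts i => [|t ts IH] [|i] //= lt_i; first exact: leq_addr.
by apply: leq_trans (IH _ lt_i) _; apply: leq_addl.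
Qed.

Lemma forest_expansion ts B : (sumn (map tr_size ts) <= B)%N ->
  foldr (@diamond F) 1 (map (Lambda F) ts) =
  \sum_(r : {ffun 'I_(size ts) -> 'I_B})
     (\prod_(i < size ts) Ccoef F (r i) (child ts i))
     *: qsh_poly F [seq (tr_size (child ts i) - r i)%N | i : 'I_(size ts) <- enum 'I_(size ts)].
Proof.
move=> le_KB; rewrite -(foldr_diamond_expansion B (fun i r => Ccoef F r (child ts i))
  (fun i => tr_size (child ts i))); congr foldr.
rewrite -[ts in LHS](mkseq_nth (Node [::])) /mkseq -val_enum_ord -!map_comp.
apply: eq_map => i /=; apply: Lambda_expansion; apply: leq_trans le_KB.
exact: tr_size_child.
Qed.

Lemma Ccoef_node ts s : Ccoef F s (Node ts) =
  if (s <= sumn (map tr_size ts))%N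
  then (foldr (@diamond F) 1 (map (Lambda F) ts))`_(sumn (map tr_size ts) - s) else 0.
Proof. by rewrite /Ccoef /= ltnS; case: leqP => // le_s; rewrite subSn // coefMX. Qed.

Lemma sumn_shape ts (f : {ffun 'I_(size ts) -> nat}) :
  (forall i, f i <= tr_size (child ts i))%N ->
  (sumn [seq tr_size (child ts i) - f i | i : 'I_(size ts) <- enum 'I_(size ts)] + \sum_i f i)%N =
  sumn (map tr_size ts).
Proof.
move=> le_f; rewrite sumnE big_map big_enum /= -big_split /=.
rewrite (eq_bigr (fun i : 'I_(size ts) => tr_size (child ts i))) => [|i _]; last by rewrite subnK.
by rewrite sumnE big_map (big_nth (Node [::])) big_mkord.
Qed.

Lemma Ccoef_recursion ts s :
  Ccoef F s (Node ts) =
  \sum_(j < s.+1)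
    \sum_(r : {ffun 'I_(size ts) -> 'I_(s - j).+1}
            | (\sum_(i < size ts) (r i : nat))%N == (s - j)%N)
      (qsh (map (fun i : 'I_(size ts) => (tr_size (child ts i) - r i)%N) (enum 'I_(size ts))) j)%:R
      * \prod_(i < size ts) Ccoef F (r i) (child ts i).
Proof.
set n := size ts; set K := sumn (map tr_size ts); pose B := (s + K).+1.
pose c (f : {ffun 'I_n -> nat}) := \prod_(i < n) Ccoef F (f i) (child ts i).
pose shape (f : {ffun 'I_n -> nat}) := [seq (tr_size (child ts i) - f i)%N | i : 'I_n <- enum 'I_n].
pose g j f := (qsh (shape f) j)%:R * c f.
(* Each term of the expansion of Lambda, at degree K - s, is a term of the
   recursion: a factor C_{r_i}(t_i) with r_i >= |t_i| kills both. *)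
have termE f : c f * (if (s <= K)%N then (qsh_poly F (shape f))`_(K - s) else 0) =
    if (\sum_i f i <= s)%N then g (s - \sum_i f i)%N f else 0.
  have [/forallP small | /forallPn [i]] := boolP [forall i, f i < tr_size (child ts i)]%N.
    rewrite /K -(sumn_shape (fun i => ltnW (small i))) coef_qsh_poly_shift.
    by rewrite /g; case: ifP; rewrite ?mulr0 // mulrC.
  rewrite -leqNgt => big_i; have c0 : c f = 0.
    by rewrite /c (bigD1 i) //= /Ccoef ltnNge big_i mul0r.
  by rewrite /g c0 mul0r mulr0; case: ifP.
transitivity (\sum_(r : {ffun 'I_n -> 'I_B})
    c (ffun_val r) * (if (s <= K)%N then (qsh_poly F (shape (ffun_val r)))`_(K - s) else 0)).
  rewrite Ccoef_node (forest_expansion (leqW (leq_addl s K))); case: ifP => _.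
    rewrite coef_sum; apply: eq_bigr => r _; rewrite coefZ /c /shape.
    by congr (_ * (qsh_poly F _)`_ _); [apply: eq_bigr | apply: eq_map] => i *; rewrite ffun_valE.
  by rewrite big1 // => r _; rewrite mulr0.
rewrite (eq_bigr _ (fun r _ => termE (ffun_val r))) -sum_compositions ?ltnS ?leq_addr //.
apply: eq_bigr => j _; apply: eq_big => r; first by under eq_bigr do rewrite ffun_valE.
rewrite /g /c /shape => _.
by congr ((qsh _ _)%:R * _); [apply: eq_map | apply: eq_bigr] => i *; rewrite ffun_valE.
Qed.

Lemma qsh_mon_top i j : (qsh_mon F i j)`_(i + j) = 'C(i + j, i)%:R.
Proof.
have small a b m : (a + b < m)%N -> (qsh_mon F a b)`_m = 0.
  by move=> lt_m; rewrite nth_default // (leq_trans (size_qsh_mon a b)).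
elim: i j => [|i IHi] j; first by rewrite coefXn eqxx bin0.
elim: j => [|j IHj]; first by rewrite addn0 coefXn eqxx binn.
rewrite addSn coefMX /= !coefD IHi addnS -addSn IHj small ?addr0 ?addnS //.
by rewrite [in RHS]binS natrD addrC.
Qed.

Lemma diamond_top p q a b : (size p <= a.+1)%N -> (size q <= b.+1)%N ->
  (diamond p q)`_(a + b) = p`_a * q`_b * 'C(a + b, a)%:R.
Proof.
move=> le_pa le_qb; rewrite /diamond coef_sum.
pose Gi i := (\sum_(j < size q) (p`_i * q`_j) *: qsh_mon F i j)`_(a + b).
rewrite (@big_ord_widen_neutral _ _ _ _ a.+1 Gi) // => [|i le_i _]; last first.
  by rewrite /Gi big1 ?coef0 // => j _; rewrite (nth_default 0 le_i) mul0r scale0r.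
rewrite big_ord_recr /= big1 ?add0r => [|i _]; last first.
  rewrite /Gi coef_sum big1 // => j _; rewrite coefZ (@nth_default _ 0 (qsh_mon F i j)) ?mulr0 //.
  by apply: leq_trans (size_qsh_mon _ _) _; rewrite -addSn leq_add // -ltnS (leq_trans (ltn_ord j)).
rewrite /Gi coef_sum.
pose Gj j := ((p`_a * q`_j) *: qsh_mon F a j)`_(a + b).
rewrite (@big_ord_widen_neutral _ _ _ _ b.+1 Gj) // => [|j le_j _]; last first.
  by rewrite /Gj (nth_default 0 le_j) mulr0 scale0r coef0.
rewrite big_ord_recr /= big1 ?add0r => [|j _]; last first.
  rewrite /Gj coefZ (@nth_default _ 0 (qsh_mon F a j)) ?mulr0 //.
  by apply: leq_trans (size_qsh_mon _ _) _; rewrite -addnS leq_add2l.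
by rewrite /Gj coefZ qsh_mon_top.
Qed.

Lemma forest_top ts :
  (forall t, List.In t ts -> (Lambda F t)`_(tr_size t) * (tfact t)%:R = (tr_size t)`!%:R) ->
  (foldr (@diamond F) 1 (map (Lambda F) ts))`_(sumn (map tr_size ts))
    * (foldr muln 1%N (map tfact ts))%:R = (sumn (map tr_size ts))`!%:R.
Proof.
elim: ts => [|t ts IH] top /=; first by rewrite coef1 mulr1.
rewrite diamond_top ?size_Lambda ?(size_forest (fun u _ => size_Lambda u)) //.
rewrite natrM mulrAC mulrACA top; last by left.
rewrite IH => [|u in_u]; last by apply: top; right.
by rewrite -!natrM mulnC -(bin_fact (leq_addr _ (tr_size t))) addKn.
Qed.

Lemma Lambda_top t : (Lambda F t)`_(tr_size t) * (tfact t)%:R = (tr_size t)`!%:R.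
Proof.
elim/tree_ind_In: t => ts IH.
by rewrite /= coefMX /= natrM mulrCA forest_top // factS natrM.
Qed.

Lemma tfact_gt0 t : (0 < tfact t)%N.
Proof.
elim/tree_ind_In: t => ts IH; rewrite /= muln_gt0 /=.
elim: ts IH => [|t ts IHts] IH //=; rewrite muln_gt0 IH; last by left.
by apply: IHts => u in_u; apply: IH; right.
Qed.

Lemma Ccoef0 (char0 : [pchar F] =i pred0) t : Ccoef F 0 t = (tr_size t)`!%:R / (tfact t)%:R.
Proof.
have nz_tfact : (tfact t)%:R != 0 :> F by move/pcharf0P: char0 => ->; rewrite -lt0n tfact_gt0.
by rewrite -Lambda_top mulfK // /Ccoef subn0; case: t {nz_tfact}.
Qed.

(* The unit 1 = x^0 is neutral for <>; with Lambda(E_1) = x this gives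
   Lambda(E_k) = x^k, and |E_k| = k. *)
Lemma qsh_mon_0r k : qsh_mon F k 0 = 'X^k.
Proof. by case: k. Qed.

Lemma diamond1 p : diamond p 1 = p.
Proof.
rewrite /diamond size_poly1 -[RHS]coefK poly_def; apply: eq_bigr => i _.
by rewrite big_ord1 coef1 /= mulr1 qsh_mon_0r.
Qed.

Lemma Lambda_ladder k : (0 < k)%N -> Lambda F (ladder k) = 'X^k.
Proof.
elim: k => [|[|k] IH] // _; first by rewrite /= mul1r expr1.
by rewrite [ladder _]/= /= diamond1 -[iter _ _ _]/(ladder k.+1) IH // -exprSr.
Qed.

Lemma tr_size_ladder k : (0 < k)%N -> tr_size (ladder k) = k.
Proof.
elim: k => [|[|k] IH] // _.
by rewrite [ladder _]/= /= -[iter _ _ _]/(ladder k.+1) IH // addn0.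
Qed.

(* Third assertion: for the generalized corolla B_+(E_k1 ... E_kn), the
   forest polynomial is x^k1 <> ... <> x^kn, so C_s is qsh(k1, ..., kn; s). *)
Lemma Ccoef_corolla ks s : all (fun k => 0 < k)%N ks ->
  Ccoef F s (Node (map ladder ks)) = (qsh ks s)%:R.
Proof.
move=> pos_ks; rewrite Ccoef_node.
have -> : map (Lambda F) (map ladder ks) = map (fun k => 'X^k) ks.
  by rewrite -map_comp; apply/eq_in_map => k /(allP pos_ks) /Lambda_ladder.
have -> : sumn (map tr_size (map ladder ks)) = sumn ks.
  rewrite -map_comp; congr sumn; rewrite -[RHS]map_id.
  by apply/eq_in_map => k /(allP pos_ks) /tr_size_ladder.
by have := coef_qsh_poly_shift F ks 0 s; rewrite addn0 subn0.
Qed.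

End Trees.

Unset Implicit Arguments.

Theorem mainTheorem19 (F : fieldType) (hF : [pchar F] =i pred0) :
  (forall (ts : seq tree) (s : nat),
     Ccoef F s (Node ts) =
     \sum_(j < s.+1)
       \sum_(r : {ffun 'I_(size ts) -> 'I_(s - j).+1}
               | (\sum_(i < size ts) (r i : nat))%N == (s - j)%N)
         (qsh (map (fun i : 'I_(size ts) => (tr_size (nth (Node [::]) ts i) - r i)%N) (enum 'I_(size ts))) j)%:R
         * \prod_(i < size ts) Ccoef F (r i) (nth (Node [::]) ts i))
  /\ (forall t : tree, Ccoef F 0 t = (tr_size t)`!%:R / (tfact t)%:R)
  /\ (forall (ks : seq nat) (s : nat), all (fun k => 0 < k)%N ks ->
        Ccoef F s (Node (map ladder ks)) = (qsh ks s)%:R).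
Proof.
split; first exact: Ccoef_recursion.
split; first exact: Ccoef0.
exact: Ccoef_corolla.
Qed.
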